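(* Let $(T,\eta,\mu,T_0,m_0)$ be an ideal monad on a category $\mathcal{C}$ with finite coproducts. Then the Eilenberg–Moore category $\mathbf{EM}(T)$ is isomorphic to the full subcategory of the category $\mathbf{Alg}(T_0)$ of functor $T_0$-algebras consisting of those $a:T_0X\to X$ satisfying $a\circ m_{0,X}=a\circ T_0[\mathrm{id}_X,a]$ (as maps $T_0TX=T_0(X+T_0X)\to X$).
   Context: An ideal monad $(T,\eta,\mu,T_0,m_0)$ on a category with finite coproducts consists of a monad $(T,\eta,\mu)$ with $T=\mathrm{Id}+T_0$ for an endofunctor $T_0$, unit $\eta=\mathrm{inl}:\mathrm{Id}\to\mathrm{Id}+T_0$, and a natural transformation $m_0:T_0T\to T_0$ such that $\mu\circ\mathrm{inr}_T=\mathrm{inr}\circ m_0$, equivalently $\mu=[\mathrm{id}_{\mathrm{Id}+T_0},\ \mathrm{inr}\circ m_0]$. A functor $T_0$-algebra is a morphism $a:T_0X\to X$; a morphism of such algebras $a\to b$ is $f:X\to Y$ with $f\circ a=b\circ T_0f$. *)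

From Stdlib Require Import ProofIrrelevance.

Set Implicit Arguments.
Unset Strict Implicit.

Record Category := {
  Ob :> Type;
  Hom : Ob -> Ob -> Type;
  idm : forall A, Hom A A;
  comp : forall A B C, Hom B C -> Hom A B -> Hom A C;
  comp_id_l : forall A B (f : Hom A B), comp (idm B) f = f;
  comp_id_r : forall A B (f : Hom A B), comp f (idm A) = f;
  comp_assoc : forall A B C D (h : Hom C D) (g : Hom B C) (f : Hom A B),
      comp h (comp g f) = comp (comp h g) f
}.
Arguments Hom {c} _ _.
Arguments idm {c} _.
Arguments comp {c A B C} _ _.

Notation "g \oc f" := (comp g f) (at level 40, left associativity).

Record Functor (C D : Category) := {
  fobj :> C -> D;
  fmap : forall A B, @Hom C A B -> @Hom D (fobj A) (fobj B);
  fmap_id : forall A, fmap (idm A) = idm (fobj A);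
  fmap_comp : forall A B E (g : @Hom C B E) (f : @Hom C A B),
      fmap (g \oc f) = fmap g \oc fmap f
}.
Arguments fmap {C D} _ {A B} _.

Definition Id_functor (C : Category) : Functor C C.
Proof.
  refine {| fobj := fun X => X; fmap := fun A B f => f |}; reflexivity.
Defined.

Definition comp_functor (C D E : Category) (G : Functor D E) (F : Functor C D)
  : Functor C E.
Proof.
  refine {| fobj := fun X => G (F X); fmap := fun A B f => fmap G (fmap F f) |}.
  - intros A. rewrite !fmap_id. reflexivity.
  - intros A B E' g f. rewrite !fmap_comp. reflexivity.
Defined.

Definition cast_hom (C : Category) (x' y' x y : C) (ex : x' = x) (ey : y' = y)
  (h : Hom x' y') : Hom x y :=
  match ex in _ = a, ey in _ = b return Hom a b with
  | eq_refl, eq_refl => h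
  end.

Definition functor_eq (C D : Category) (F G : Functor C D) : Prop :=
  exists e : forall X, F X = G X,
    forall A B (f : @Hom C A B), cast_hom (e A) (e B) (fmap F f) = fmap G f.

Definition cat_isomorphic (C D : Category) : Prop :=
  exists (F : Functor C D) (G : Functor D C),
    functor_eq (comp_functor G F) (Id_functor C) /\
    functor_eq (comp_functor F G) (Id_functor D).

Record FinCoprodCat := {
  fc_cat :> Category;
  initial : fc_cat;
  init_map : forall X : fc_cat, Hom initial X;
  init_map_unique : forall X (f : Hom initial X), f = init_map X;
  coprod : fc_cat -> fc_cat -> fc_cat;
  inl : forall X Y : fc_cat, Hom X (coprod X Y);
  inr : forall X Y : fc_cat, Hom Y (coprod X Y);
  copair : forall X Y Z : fc_cat, Hom X Z -> Hom Y Z -> Hom (coprod X Y) Z;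
  copair_inl : forall X Y Z (f : Hom X Z) (g : Hom Y Z), copair f g \oc inl X Y = f;
  copair_inr : forall X Y Z (f : Hom X Z) (g : Hom Y Z), copair f g \oc inr X Y = g;
  copair_unique : forall X Y Z (f : Hom X Z) (g : Hom Y Z) (h : Hom (coprod X Y) Z),
      h \oc inl X Y = f -> h \oc inr X Y = g -> h = copair f g
}.
Arguments coprod {_} _ _.
Arguments inl {_} _ _.
Arguments inr {_} _ _.
Arguments copair {_ X Y Z} _ _.

Section IdealMonad.
Variable C : FinCoprodCat.

(* T = Id + T0 : on objects X |-> X + T0 X, on morphisms f |-> f + T0 f. *)
Definition Tobj (T0 : Functor C C) (X : C) : C := coprod X (T0 X).
Definition Tmap (T0 : Functor C C) (X Y : C) (f : Hom X Y) : Hom (Tobj T0 X) (Tobj T0 Y) :=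
  copair (inl Y (T0 Y) \oc f) (inr Y (T0 Y) \oc fmap T0 f).

(* An ideal monad (T, eta, mu, T0, m0) with T = Id + T0 and eta = inl. *)
Record IdealMonad := {
  T0 : Functor C C;
  mu : forall X : C, Hom (Tobj T0 (Tobj T0 X)) (Tobj T0 X);
  m0 : forall X : C, Hom (T0 (Tobj T0 X)) (T0 X);
  mu_nat : forall X Y (f : Hom X Y),
      mu Y \oc Tmap T0 (Tmap T0 f) = Tmap T0 f \oc mu X;
  m0_nat : forall X Y (f : Hom X Y),
      m0 Y \oc fmap T0 (Tmap T0 f) = fmap T0 f \oc m0 X;
  mu_eta_l : forall X, mu X \oc inl (Tobj T0 X) (T0 (Tobj T0 X)) = idm (Tobj T0 X);
  mu_eta_r : forall X, mu X \oc Tmap T0 (inl X (T0 X)) = idm (Tobj T0 X);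
  mu_assoc : forall X, mu X \oc mu (Tobj T0 X) = mu X \oc Tmap T0 (mu X);
  mu_inr : forall X, mu X \oc inr (Tobj T0 X) (T0 (Tobj T0 X)) = inr X (T0 X) \oc m0 X
}.

Variable M : IdealMonad.
Let T0M := T0 M.
Let TX (X : C) := Tobj T0M X.

Definition is_EM_alg (X : C) (a : Hom (TX X) X) : Prop :=
  a \oc inl X (T0M X) = idm X /\ a \oc mu M X = a \oc Tmap T0M a.

Definition EM_ob := { X : C & { a : Hom (TX X) X | is_EM_alg a } }.
Definition EM_car (A : EM_ob) : C := projT1 A.
Definition EM_str (A : EM_ob) : Hom (TX (EM_car A)) (EM_car A) := proj1_sig (projT2 A).

Definition EM_hom (A B : EM_ob) :=
  { f : Hom (EM_car A) (EM_car B) | f \oc EM_str A = EM_str B \oc Tmap T0M f }.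

Definition is_ideal_alg (X : C) (a : Hom (T0M X) X) : Prop :=
  a \oc m0 M X = a \oc fmap T0M (copair (idm X) a).

Definition Alg0_ob := { X : C & { a : Hom (T0M X) X | is_ideal_alg a } }.
Definition Alg0_car (A : Alg0_ob) : C := projT1 A.
Definition Alg0_str (A : Alg0_ob) : Hom (T0M (Alg0_car A)) (Alg0_car A) :=
  proj1_sig (projT2 A).

Definition Alg0_hom (A B : Alg0_ob) :=
  { f : Hom (Alg0_car A) (Alg0_car B) | f \oc Alg0_str A = Alg0_str B \oc fmap T0M f }.

Lemma Tmap_id (X : C) : Tmap T0M (idm X) = idm (TX X).
Proof.
  unfold Tmap, Tobj. rewrite fmap_id, !comp_id_r. symmetry.
  apply copair_unique; rewrite comp_id_l; reflexivity.
Qed.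

Lemma Tmap_comp (X Y Z : C) (g : Hom Y Z) (f : Hom X Y) :
  Tmap T0M (g \oc f) = Tmap T0M g \oc Tmap T0M f.
Proof.
  unfold Tmap, Tobj. symmetry. apply copair_unique.
  - rewrite <- comp_assoc, copair_inl, comp_assoc, copair_inl, comp_assoc. reflexivity.
  - rewrite <- comp_assoc, copair_inr, comp_assoc, copair_inr, fmap_comp, comp_assoc.
    reflexivity.
Qed.

Definition EM_id (A : EM_ob) : EM_hom A A.
Proof.
  exists (idm _). rewrite Tmap_id, comp_id_l, comp_id_r. reflexivity.
Defined.

Definition EM_comp (A B D : EM_ob) (g : EM_hom B D) (f : EM_hom A B) : EM_hom A D.
Proof.
  exists (proj1_sig g \oc proj1_sig f).
  rewrite Tmap_comp, <- comp_assoc, (proj2_sig f), !comp_assoc, (proj2_sig g).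
  reflexivity.
Defined.

Definition EM_cat : Category.
Proof.
  refine {| Ob := EM_ob; Hom := EM_hom; idm := EM_id; comp := EM_comp |}.
  - intros A B [f Hf]. apply eq_sig_hprop; [intros; apply proof_irrelevance|].
    simpl. apply comp_id_l.
  - intros A B [f Hf]. apply eq_sig_hprop; [intros; apply proof_irrelevance|].
    simpl. apply comp_id_r.
  - intros A B D E h g f. apply eq_sig_hprop; [intros; apply proof_irrelevance|].
    simpl. apply comp_assoc.
Defined.

Definition Alg0_id (A : Alg0_ob) : Alg0_hom A A.
Proof.
  exists (idm _). rewrite fmap_id, comp_id_l, comp_id_r. reflexivity.
Defined.

Definition Alg0_comp (A B D : Alg0_ob) (g : Alg0_hom B D) (f : Alg0_hom A B)
  : Alg0_hom A D.
Proof.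
  exists (proj1_sig g \oc proj1_sig f).
  rewrite fmap_comp, <- comp_assoc, (proj2_sig f), !comp_assoc, (proj2_sig g).
  reflexivity.
Defined.

Definition Alg0_cat : Category.
Proof.
  refine {| Ob := Alg0_ob; Hom := Alg0_hom; idm := Alg0_id; comp := Alg0_comp |}.
  - intros A B [f Hf]. apply eq_sig_hprop; [intros; apply proof_irrelevance|].
    simpl. apply comp_id_l.
  - intros A B [f Hf]. apply eq_sig_hprop; [intros; apply proof_irrelevance|].
    simpl. apply comp_id_r.
  - intros A B D E h g f. apply eq_sig_hprop; [intros; apply proof_irrelevance|].
    simpl. apply comp_assoc.
Defined.

End IdealMonad.

(* An Eilenberg-Moore algebra a : X + T0 X -> X is determined, by the unit law
   a o inl = id, by its restriction a o inr : T0 X -> X, namely a = [id, a o inr].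
   Testing the multiplication law a o mu = a o T a on the two summands of
   T T X = T X + T0 T X, it holds trivially on the first one (mu o inl = id) and,
   since mu o inr = inr o m0, on the second one it says exactly
   (a o inr) o m0 = (a o inr) o T0 [id, a o inr].  Algebra morphisms are the same
   maps of carriers on both sides, so restriction along inr and extension by
   [id, -] are mutually inverse functors. *)

From Stdlib Require Import ProofIrrelevance.
Set Implicit Arguments.
Unset Strict Implicit.

Section Coproducts.
Variable C : FinCoprodCat.

Lemma copair_eta (X Y Z : C) (h : Hom (coprod X Y) Z) :
  h = copair (h \oc inl X Y) (h \oc inr X Y).
Proof. apply copair_unique; reflexivity. Qed.

Lemma coprod_hom_ext (X Y Z : C) (h1 h2 : Hom (coprod X Y) Z) :
  h1 \oc inl X Y = h2 \oc inl X Y -> h1 \oc inr X Y = h2 \oc inr X Y -> h1 = h2.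
Proof.
  intros Hl Hr. rewrite (copair_eta h1), (copair_eta h2), Hl, Hr. reflexivity.
Qed.

Variable T0 : Functor C C.

Lemma Tmap_inl (X Y : C) (f : Hom X Y) :
  Tmap T0 f \oc inl X (T0 X) = inl Y (T0 Y) \oc f.
Proof. apply copair_inl. Qed.

Lemma Tmap_inr (X Y : C) (f : Hom X Y) :
  Tmap T0 f \oc inr X (T0 X) = inr Y (T0 Y) \oc fmap T0 f.
Proof. apply copair_inr. Qed.

Lemma copair_id_hom (X Y : C) (a : Hom (T0 X) X) (b : Hom (T0 Y) Y) (f : Hom X Y) :
  f \oc a = b \oc fmap T0 f ->
  f \oc copair (idm X) a = copair (idm Y) b \oc Tmap T0 f.
Proof.
  intros Hf. unfold Tmap, Tobj. apply coprod_hom_ext; rewrite <- !comp_assoc.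
  - rewrite !copair_inl, comp_assoc, copair_inl, comp_id_l, comp_id_r. reflexivity.
  - rewrite !copair_inr, comp_assoc, copair_inr. exact Hf.
Qed.

Lemma inr_hom (X Y : C) (a : Hom (Tobj T0 X) X) (b : Hom (Tobj T0 Y) Y) (f : Hom X Y) :
  f \oc a = b \oc Tmap T0 f ->
  f \oc (a \oc inr X (T0 X)) = (b \oc inr Y (T0 Y)) \oc fmap T0 f.
Proof.
  intros Hf. rewrite comp_assoc, Hf, <- !comp_assoc, Tmap_inr. reflexivity.
Qed.

End Coproducts.

Lemma existT_exist_eq (I : Type) (S : I -> Type) (P : forall i, S i -> Prop)
    (i : I) (s s' : S i) (ps : P i s) (ps' : P i s') :
  s = s' ->
  existT (fun i => {s | P i s}) i (exist _ s ps) = existT _ i (exist _ s' ps').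
Proof. intros <-. rewrite (proof_irrelevance _ ps ps'). reflexivity. Qed.

Lemma cast_hom_id (C : Category) (X Y : C) (eX : X = X) (eY : Y = Y) (h : Hom X Y) :
  cast_hom eX eY h = h.
Proof.
  rewrite (proof_irrelevance _ eX eq_refl), (proof_irrelevance _ eY eq_refl).
  reflexivity.
Qed.

Lemma cast_hom_map (D E : Category) (car : D -> E)
    (U : forall A B : D, Hom A B -> Hom (car A) (car B))
    (A B A' B' : D) (eA : A = A') (eB : B = B') (h : Hom A B) :
  U A' B' (cast_hom eA eB h) = cast_hom (f_equal car eA) (f_equal car eB) (U A B h).
Proof. destruct eA, eB. reflexivity. Qed.

Section IdealAlgebras.
Variables (C : FinCoprodCat) (M : IdealMonad C).

Lemma EM_alg_copair_inr (X : C) (a : Hom (Tobj (T0 M) X) X) :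
  is_EM_alg a -> copair (idm X) (a \oc inr X (T0 M X)) = a.
Proof.
  intros [Hunit _]. symmetry. apply copair_unique; [exact Hunit | reflexivity].
Qed.

Lemma EM_alg_inr_ideal (X : C) (a : Hom (Tobj (T0 M) X) X) :
  is_EM_alg a -> is_ideal_alg (a \oc inr X (T0 M X)).
Proof.
  intros Ha. unfold is_ideal_alg. rewrite (EM_alg_copair_inr Ha).
  destruct Ha as [_ Hmult].
  rewrite <- comp_assoc, <- (mu_inr M), comp_assoc, Hmult, <- comp_assoc, Tmap_inr,
    comp_assoc.
  reflexivity.
Qed.

Lemma ideal_alg_copair_EM (X : C) (a : Hom (T0 M X) X) :
  is_ideal_alg a -> is_EM_alg (copair (idm X) a).
Proof.
  intros Ha. split.
  - apply copair_inl.
  - apply coprod_hom_ext; rewrite <- !comp_assoc.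
    + rewrite (mu_eta_l M), Tmap_inl, comp_assoc, copair_inl, comp_id_l, comp_id_r.
      reflexivity.
    + rewrite (mu_inr M), Tmap_inr, !comp_assoc, !copair_inr. exact Ha.
Qed.

Definition EM_to_Alg0_ob (A : EM_ob M) : Alg0_ob M :=
  existT _ (EM_car A)
    (exist _ (EM_str A \oc inr _ _) (EM_alg_inr_ideal (proj2_sig (projT2 A)))).

Definition Alg0_to_EM_ob (A : Alg0_ob M) : EM_ob M :=
  existT _ (Alg0_car A)
    (exist _ (copair (idm _) (Alg0_str A)) (ideal_alg_copair_EM (proj2_sig (projT2 A)))).

Definition EM_to_Alg0 : Functor (EM_cat M) (Alg0_cat M).
Proof.
  refine {| fobj := (EM_to_Alg0_ob : EM_cat M -> Alg0_cat M);
            fmap := fun (A B : EM_ob M) (f : EM_hom A B) =>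
              (exist _ (proj1_sig f) (inr_hom (proj2_sig f))
                : Alg0_hom (EM_to_Alg0_ob A) (EM_to_Alg0_ob B)) |};
    intros; apply eq_sig_hprop; solve [intros; apply proof_irrelevance | reflexivity].
Defined.

Definition Alg0_to_EM : Functor (Alg0_cat M) (EM_cat M).
Proof.
  refine {| fobj := (Alg0_to_EM_ob : Alg0_cat M -> EM_cat M);
            fmap := fun (A B : Alg0_ob M) (f : Alg0_hom A B) =>
              (exist _ (proj1_sig f) (copair_id_hom (proj2_sig f))
                : EM_hom (Alg0_to_EM_ob A) (Alg0_to_EM_ob B)) |};
    intros; apply eq_sig_hprop; solve [intros; apply proof_irrelevance | reflexivity].
Defined.

Lemma EM_to_Alg0_obK (A : EM_ob M) : Alg0_to_EM_ob (EM_to_Alg0_ob A) = A.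
Proof.
  destruct A as [X [a Ha]].
  apply (existT_exist_eq (S := fun X => Hom (Tobj (T0 M) X) X)), EM_alg_copair_inr, Ha.
Qed.

Lemma Alg0_to_EM_obK (A : Alg0_ob M) : EM_to_Alg0_ob (Alg0_to_EM_ob A) = A.
Proof.
  destruct A as [X [a Ha]].
  apply (existT_exist_eq (S := fun X => Hom (T0 M X) X)), copair_inr.
Qed.

Lemma EM_to_Alg0K :
  functor_eq (comp_functor Alg0_to_EM EM_to_Alg0) (Id_functor (EM_cat M)).
Proof.
  exists EM_to_Alg0_obK. intros A B f.
  (* Both functors keep the carrier, so the cast acts on underlying maps along
     equations X = X, which are trivial by proof irrelevance. *)
  apply eq_sig_hprop; [intros; apply proof_irrelevance |].
  etransitivity;
    [apply (cast_hom_map (D := EM_cat M) (car := @EM_car C M)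
              (fun A B (g : EM_hom A B) => proj1_sig g)) |].
  apply cast_hom_id.
Qed.

Lemma Alg0_to_EMK :
  functor_eq (comp_functor EM_to_Alg0 Alg0_to_EM) (Id_functor (Alg0_cat M)).
Proof.
  exists Alg0_to_EM_obK. intros A B f.
  apply eq_sig_hprop; [intros; apply proof_irrelevance |].
  etransitivity;
    [apply (cast_hom_map (D := Alg0_cat M) (car := @Alg0_car C M)
              (fun A B (g : Alg0_hom A B) => proj1_sig g)) |].
  apply cast_hom_id.
Qed.

End IdealAlgebras.

Theorem lemma17 (C : FinCoprodCat) (M : IdealMonad C) :
  cat_isomorphic (EM_cat M) (Alg0_cat M).
Proof.
  exists (EM_to_Alg0 M), (Alg0_to_EM M).
  split; [apply EM_to_Alg0K | apply Alg0_to_EMK].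
Qed.
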